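(* Let Assumptions (H), (R) and (F) hold, let $X$ be a local diffusion generated by $\mathcal A_t$ on $D$, and let $\Gamma$ be its local transition density on $D$ (a non-negative measurable function $\Gamma(t,x;T,y)$, $0<t<T<T_0$, $x\in\mathbb R^d$, $y\in D$, with $p(t,x;T,A)=\int_A\Gamma(t,x;T,y)dy$ for Borel $A\subseteq D$, continuous in $y\in D$ and bounded on compact subsets of $D$ uniformly in $x\in\mathbb R^d$). Then for all $0<t<T<T_0$ and $\xi\in D$, the function $x\mapsto\Gamma(t,x;T,\xi)$ is bounded and Borel measurable on $\mathbb R^d$, and $$\Gamma(t,x;T,\xi)=E_{t,x}\big[\Gamma(s,X_s;T,\xi)\big],\qquad t<s<T,\ x\in\mathbb R^d.$$
   Context: Fix $T_0>0$, integers $1\le p_0\le d$, a real $d\times d$ matrix $B$, $Y:=\langle Bx,\nabla_x\rangle+\partial_t$. Assumption (H): $\mathrm{rank}\,\mathrm{Lie}(\partial_{x_1},\dots,\partial_{x_{p_0}},Y)=d$. Intrinsic Hölder spaces $C^{n,\alpha}_B(Q)$ for a domain $Q\subseteq\mathbb R^{1+d}$: with $e^{\delta\partial_{x_i}}(t,x)=(t,x+\delta e_i)$, $e^{\delta Y}(t,x)=(t+\delta,e^{\delta B}x)$, $\delta_{(t,x)}$ the sup of $\bar\delta\in]0,1]$ with these points in $Q$ for $|\delta|\le\bar\delta$, $\delta_V=\inf_V\delta_{(t,x)}$; $f\in C^{\alpha_1}_{\partial_{x_i}}(Q)$ (resp. $C^{\alpha_2}_Y(Q)$) if $\sup_{V,0<|\delta|<\delta_V}|f(e^{\delta\partial_{x_i}}(t,x))-f(t,x)|/|\delta|^{\alpha_1}$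 (resp. $|f(e^{\delta Y}(t,x))-f(t,x)|/|\delta|^{\alpha_2/2}$) is finite for every $V\Subset Q$. $C^{0,\alpha}_B=C^\alpha_Y\cap\bigcap_{i\le p_0}C^\alpha_{\partial_{x_i}}$; $C^{1,\alpha}_B$: $f\in C^{1+\alpha}_Y$, $\partial_{x_i}f\in C^{0,\alpha}_B$; $n\ge2$: Lie derivative $Yf$ exists in $C^{n-2,\alpha}_B$ and $\partial_{x_i}f\in C^{n-1,\alpha}_B$ ($i\le p_0$). Markov setting. $X=(X_s)_{s\in[0,T_0[}$ is a continuous strong Markov process on $(\Omega,\mathcal F,(\mathcal F^t_T),(P_{t,x}))$ with transition probability $p(t,x;T,d\xi)$; $E_{t,x}$ is $P_{t,x}$-expectation. $\lim_{T-t\to0^+}$ means the common value of $\lim_{h\to0^+}f(t,t+h)$ and $\lim_{h\to0^+}f(t-h,t)$. $D$ is a domain, $a_{ij}=a_{ji},a_i\in L^\infty_{loc}([0,T_0[\times D)$, $\mathcal A_t=\frac12\sum_{i,j\le p_0}a_{ij}\partial_{x_ix_j}+\sum_{i\le p_0}a_i\partial_{x_i}+\langle Bx,\nabla_x\rangle$. $X$ is a local diffusion generated by $\mathcal A_t$ on $D$ if for all $t\in[0,T_0[$, $\delta>0$, compact $H\subset D$: [Lim-i] $\frac1{T-t}p(t,x;T,\{|\xi-x|>\delta\}\cap H)\to0$ uniformly in $x\in\mathbb R^d$ and $\frac1{T-t}p(t,x;T,\{|\xi-x|>\delta\})\to0$ uniformly in $x\in H$; [Lim-ii] uniformly in $x\in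 H$, $\frac1{T-t}\int_{|\xi-x|<\delta}(\xi-x)_ip(t,x;T,d\xi)\to a_i(t,x)+(Bx)_i$ ($i\le p_0$), $\to(Bx)_i$ ($i>p_0$); $\frac1{T-t}\int_{|\xi-x|<\delta}(\xi-x)_i(\xi-x)_jp(t,x;T,d\xi)\to a_{ij}(t,x)$ ($i,j\le p_0$), $\to0$ otherwise. Assumption (R): there are $N\in\mathbb N_0$, $\alpha\in]0,1]$, $M>0$ with $a_{ij},a_i\in C^{N,\alpha}_B(]0,T_0[\times D)$, all Lie derivatives bounded by $M$, and $M^{-1}|\xi|^2\le\sum_{i,j\le p_0}a_{ij}(t,x)\xi_i\xi_j\le M|\xi|^2$ on $]0,T_0[\times D$. Assumption (F): for every $T\in]0,T_0[$ and every bounded continuous $\varphi$ on $\mathbb R^d$, $(t,x)\mapsto E_{t,x}[\varphi(X_T)]$ is continuous on $]0,T[\times D$. *)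

From HB Require Import structures.
From mathcomp Require Import all_boot all_order all_algebra.
From mathcomp Require Import all_classical all_reals all_analysis.

Set Implicit Arguments.
Unset Strict Implicit.
Unset Printing Implicit Defensive.

Import Order.TTheory GRing.Theory Num.Theory.
Import numFieldNormedType.Exports.

Local Open Scope classical_set_scope.
Local Open Scope ring_scope.

(* Conventions.  Points of R^d are row vectors 'rV[R]_d (with the library's  *)
(* topology).  Points of R^{1+d} are pairs (t, x) : R * 'rV[R]_d.  The       *)
(* column-vector expression  B x  of the paper is the row  x *m B^T.          *)
(* Coordinates are 0-based: x_1, ..., x_{p0} of the paper are the indices    *)
(* i : 'I_d with i < p0.                                                     *)

Section Defs.
Variable R : realType.

Definition borel_set (T : topologicalType) (A : set T) : Prop :=
  <<s [set: T], open >> A.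

Definition borel_on (T : topologicalType) (Dom : set T) (f : T -> R) : Prop :=
  forall A : set R, borel_set A -> borel_set (Dom `&` f @^-1` A).

Definition eucl (d : nat) (x : 'rV[R]_d) : R :=
  Num.sqrt (\sum_(i < d) (x ord0 i) ^+ 2).

Definition Bx (d : nat) (B : 'M[R]_d) (x : 'rV[R]_d) : 'rV[R]_d := x *m B^T.

Definition expmx (d : nat) (A : 'M[R]_d) : 'M[R]_d :=
  lim ((fun n : nat => \sum_(k < n) ((k`!)%:R^-1 *: A ^+ k)) @ \oo).

(* Lebesgue integral on R^d of a [0,+oo]-valued function, as the iterated     *)
(* one-dimensional Lebesgue integral (Tonelli).                              *)
Fixpoint leb_int (n : nat) : ('rV[R]_n -> \bar R) -> \bar R :=
  match n with
  | 0 => fun f => f 0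
  | m.+1 => fun f =>
      (\int[@lebesgue_measure R]_y
         leb_int (fun z : 'rV[R]_m => f (row_mx (const_mx y : 'rV[R]_1) z)))%E
  end.

(* The vector fields involved are affine on R^{1+d}; an affine vector field   *)
(* z |-> a + z *m M  (z a row in R^{1+d}, index 0 = time, indices 1..d = x)   *)
(* is represented by the pair (a, M).  Affine vector fields form a Lie        *)
(* subalgebra of smooth vector fields, with bracket                           *)
(*   [V, W](z) = DW(z) V(z) - DV(z) W(z).                                     *)
Definition affvf (d : nat) := ('rV[R]_(1 + d) * 'M[R]_(1 + d))%type.

Definition affvf_eval (d : nat) (V : affvf d) (z : 'rV[R]_(1 + d)) : 'rV[R]_(1 + d) :=
  V.1 + z *m V.2.

Definition affvf_bracket (d : nat) (V W : affvf d) : affvf d :=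
  (V.1 *m W.2 - W.1 *m V.2, V.2 *m W.2 - W.2 *m V.2).

Definition vf_dx (d : nat) (i : 'I_d) : affvf d :=
  (delta_mx 0 (rshift 1 i), 0).

(* Y = <Bx, grad_x> + d/dt *)
Definition vf_Y (d : nat) (B : 'M[R]_d) : affvf d :=
  (delta_mx 0 (lshift d (ord0 : 'I_1)), block_mx 0 0 0 B^T).

Definition in_Lie (d p0 : nat) (B : 'M[R]_d) (V : affvf d) : Prop :=
  forall S : set (affvf d),
    (forall i : 'I_d, (i < p0)%N -> S (vf_dx i)) ->
    S (vf_Y B) ->
    (forall U W, S U -> S W -> S (U.1 + W.1, U.2 + W.2)) ->
    (forall (c : R) U, S U -> S (c *: U.1, c *: U.2)) ->
    (forall U W, S U -> S W -> S (affvf_bracket U W)) ->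
    S V.

(* rank Lie(...)(z) is maximal (= d+1) at every point z of R^{1+d}: the values *)
(* at z of the fields of the Lie algebra span R^{1+d}.                       *)
Definition hoermander (d p0 : nat) (B : 'M[R]_d) : Prop :=
  forall z w : 'rV[R]_(1 + d), exists V, in_Lie p0 B V /\ affvf_eval V z = w.

Definition exp_dx (d : nat) (i : 'I_d) (delta : R) (z : R * 'rV[R]_d) : R * 'rV[R]_d :=
  (z.1, z.2 + delta *: delta_mx 0 i).

Definition exp_Y (d : nat) (B : 'M[R]_d) (delta : R) (z : R * 'rV[R]_d) : R * 'rV[R]_d :=
  (z.1 + delta, z.2 *m (expmx (delta *: B))^T).

Section Hoelder.
Variables (d p0 : nat) (B : 'M[R]_d) (Q : set (R * 'rV[R]_d)).

Definition delta_admissible (z : R * 'rV[R]_d) (db : R) : Prop :=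
  0 < db <= 1 /\
  forall delta : R, `|delta| <= db ->
    (forall i : 'I_d, (i < p0)%N -> Q (exp_dx i delta z)) /\ Q (exp_Y B delta z).

Definition delta_pt (z : R * 'rV[R]_d) : R := sup (delta_admissible z).

Definition delta_set (V : set (R * 'rV[R]_d)) : R := inf (delta_pt @` V).

Definition cpt_in (V : set (R * 'rV[R]_d)) : Prop := compact V /\ V `<=` Q.

Definition C_dx (beta : R) (i : 'I_d) (f : R * 'rV[R]_d -> R) : Prop :=
  forall V, cpt_in V -> exists C : R, forall z delta, V z ->
    0 < `|delta| < delta_set V ->
    `|f (exp_dx i delta z) - f z| <= C * powR `|delta| beta.

Definition C_Y (beta : R) (f : R * 'rV[R]_d -> R) : Prop :=
  forall V, cpt_in V -> exists C : R, forall z delta, V z ->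
    0 < `|delta| < delta_set V ->
    `|f (exp_Y B delta z) - f z| <= C * powR `|delta| (beta / 2).

Definition C0B (alpha : R) (f : R * 'rV[R]_d -> R) : Prop :=
  C_Y alpha f /\ forall i : 'I_d, (i < p0)%N -> C_dx alpha i f.

Definition pdx (i : 'I_d) (f g : R * 'rV[R]_d -> R) : Prop :=
  forall z, Q z -> is_derive (0 : R) (1 : R) (fun h : R => f (exp_dx i h z)) (g z).

Definition lieY (f g : R * 'rV[R]_d -> R) : Prop :=
  forall z, Q z -> is_derive (0 : R) (1 : R) (fun h : R => f (exp_Y B h z)) (g z).

Definition bounded_by (M : R) (f : R * 'rV[R]_d -> R) : Prop :=
  forall z, Q z -> `|f z| <= M.

(* f in C^{n,alpha}_B(Q), with f and all the Lie derivatives occurring in the *)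
(* definition bounded by M on Q.                                              *)
Fixpoint CnB_M (alpha M : R) (n : nat) (f : R * 'rV[R]_d -> R) : Prop :=
  bounded_by M f /\
  match n with
  | 0 => C0B alpha f
  | n1.+1 =>
      match n1 with
      | 0 => C_Y (1 + alpha) f /\
             forall i : 'I_d, (i < p0)%N -> exists g, pdx i f g /\ CnB_M alpha M n1 g
      | m.+1 => (exists g, lieY f g /\ CnB_M alpha M m g) /\
             forall i : 'I_d, (i < p0)%N -> exists g, pdx i f g /\ CnB_M alpha M n1 g
      end
  end.

End Hoelder.

Section Markov.
Variables (d : nat) (T0 : R) (dO : measure_display) (Omega : measurableType dO).
Variables (F : R -> R -> set (set Omega)) (X : R -> Omega -> 'rV[R]_d)
          (P : R -> 'rV[R]_d -> probability Omega R).

Definition trans (t : R) (x : 'rV[R]_d) (T : R) (A : set 'rV[R]_d) : R :=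
  fine (P t x (X T @^-1` A)).

Definition Eval (t : R) (x : 'rV[R]_d) (T : R) (phi : 'rV[R]_d -> R) : R :=
  fine (\int[P t x]_w (phi (X T w))%:E)%E.

Definition stopping_time (t T : R) (tau : Omega -> R) : Prop :=
  (forall w, t <= tau w <= T) /\
  (forall s, t <= s <= T -> F t s [set w | tau w <= s]).

Definition F_tau (t T : R) (tau : Omega -> R) (A : set Omega) : Prop :=
  F t T A /\ forall s, t <= s <= T -> F t s (A `&` [set w | tau w <= s]).

Definition bdd_fun (phi : 'rV[R]_d -> R) : Prop :=
  exists C : R, forall y, `|phi y| <= C.

Definition cont_strong_Markov : Prop :=
  (forall t T, 0 <= t <= T -> T < T0 ->
     sigma_algebra [set: Omega] (F t T) /\ F t T `<=` measurable) /\
  (forall t s T, 0 <= t <= s -> s <= T -> T < T0 -> F t s `<=` F t T) /\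
  (forall t' t T, 0 <= t' <= t -> t <= T -> T < T0 -> F t T `<=` F t' T) /\
  (forall t s, 0 <= t <= s -> s < T0 ->
     forall A, borel_set A -> F t s (X s @^-1` A)) /\
  (forall w, {within [set s | 0 <= s < T0], continuous (fun s => X s w)}) /\
  (forall t x, 0 <= t < T0 -> P t x (X t @^-1` [set x]) = 1%E) /\
  (forall t T A, 0 <= t <= T -> T < T0 -> borel_set A ->
     borel_on [set: 'rV[R]_d] (fun x => trans t x T A)) /\
  (forall t T x (tau : Omega -> R) (phi : 'rV[R]_d -> R),
     0 <= t <= T -> T < T0 -> stopping_time t T tau ->
     borel_on [set: 'rV[R]_d] phi -> bdd_fun phi ->
     forall A, F_tau t T tau A ->
       (\int[P t x]_(w in A) (phi (X T w))%:E =
        \int[P t x]_(w in A) (Eval (tau w) (X (tau w) w) T phi)%:E)%E).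

Definition lim_TmT_unif (S : set 'rV[R]_d) (g : R -> R -> 'rV[R]_d -> R)
    (t : R) (l : 'rV[R]_d -> R) : Prop :=
  forall eps : R, 0 < eps -> exists eta : R, 0 < eta /\
    forall h : R, 0 < h < eta -> forall x, S x ->
      `|g t (t + h) x - l x| < eps /\
      (0 <= t - h -> `|g (t - h) t x - l x| < eps).

Definition moment1 (delta : R) (i : 'I_d) (t T : R) (x : 'rV[R]_d) : R :=
  fine (\int[P t x]_(w in [set w | (eucl (X T w - x) < delta)%R])
          ((X T w - x) ord0 i)%:E)%E.

Definition moment2 (delta : R) (i j : 'I_d) (t T : R) (x : 'rV[R]_d) : R :=
  fine (\int[P t x]_(w in [set w | (eucl (X T w - x) < delta)%R])
          ((X T w - x) ord0 i * (X T w - x) ord0 j)%:E)%E.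

Definition local_diffusion (p0 : nat) (B : 'M[R]_d) (D : set 'rV[R]_d)
    (a : 'I_d -> 'I_d -> R * 'rV[R]_d -> R) (b : 'I_d -> R * 'rV[R]_d -> R) : Prop :=
  forall t (delta : R) (H : set 'rV[R]_d),
    0 <= t < T0 -> 0 < delta -> compact H -> H `<=` D ->
    lim_TmT_unif [set: 'rV[R]_d]
      (fun t T x => (T - t)^-1 * trans t x T ([set y | eucl (y - x) > delta] `&` H))
      t (fun _ => 0) /\
    lim_TmT_unif H
      (fun t T x => (T - t)^-1 * trans t x T [set y | eucl (y - x) > delta])
      t (fun _ => 0) /\
    (forall i : 'I_d, lim_TmT_unif H
       (fun t T x => (T - t)^-1 * moment1 delta i t T x) t
       (fun x => if (i < p0)%N then b i (t, x) + Bx B x ord0 i else Bx B x ord0 i)) /\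
    (forall i j : 'I_d, lim_TmT_unif H
       (fun t T x => (T - t)^-1 * moment2 delta i j t T x) t
       (fun x => if (i < p0)%N && (j < p0)%N then a i j (t, x) else 0)).

End Markov.

End Defs.

From HB Require Import structures.
From mathcomp Require Import all_boot all_order all_algebra.
From mathcomp Require Import all_classical all_reals all_analysis.
From mathcomp Require Import measurable_realfun.
From mathcomp Require Import ring.
Set Implicit Arguments.
Unset Strict Implicit.
Unset Printing Implicit Defensive.

Import Order.TTheory GRing.Theory Num.Theory.
Import numFieldNormedType.Exports.
Local Open Scope classical_set_scope.
Local Open Scope ring_scope.

(** For a small ball A around xi, the strong Markov property at the
    deterministic time s gives the Chapman-Kolmogorov identity
    p(t,x;T,A) = E_{t,x}[p(s,X_s;T,A)].  Dividing by |A| and letting the ball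
    shrink, both sides are averages of Gamma over A, which converge to Gamma at
    xi by continuity in the last variable; under the expectation the averages
    are uniformly bounded (Gamma is bounded near xi), so dominated convergence
    applies. *)

Section IteratedIntegral.
Variable R : realType.

Lemma ball_row_mx n (c : 'rV[R]_(1 + n)) (r y0 : R) (z : 'rV[R]_n) :
  ball c r (row_mx (const_mx y0 : 'rV[R]_1) z) <->
  ball (c ord0 (lshift n ord0)) r y0 /\ ball (rsubmx c) r z.
Proof.
rewrite /ball /= /mx_ball; split.
  move=> [r0 h]; split.
    by have := h ord0 (lshift n ord0); rewrite row_mxEl mxE.
  split => // i j; have := h i (rshift 1 j); rewrite row_mxEr mxE.
  by rewrite (ord1 i).
move=> [h1 [r0 h2]]; split => // i j; rewrite (ord1 i).
case: (splitP j) => [k jk|k jk].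
  have -> : j = lshift n k by apply: val_inj.
  by rewrite row_mxEl mxE (ord1 k).
have -> : j = rshift 1 k by apply: val_inj.
by rewrite row_mxEr; have := h2 ord0 k; rewrite mxE.
Qed.

Lemma indic_ball_row_mx n (c : 'rV[R]_(1 + n)) (r y0 : R) (z : 'rV[R]_n) :
  \1_(ball c r) (row_mx (const_mx y0 : 'rV[R]_1) z) =
  \1_(ball (c ord0 (lshift n ord0)) r) y0 * \1_(ball (rsubmx c) r) z :> R.
Proof.
rewrite !indicE.
have [h|h] := pselect (ball c r (row_mx (const_mx y0 : 'rV[R]_1) z)).
  by move/ball_row_mx: (h) => [h1 h2]; rewrite !mem_set // mulr1.
have [h1|h1] := pselect (ball (c ord0 (lshift n ord0)) r y0); last first.
  by rewrite (memNset h1) (memNset h) mul0r.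
have [h2|h2] := pselect (ball (rsubmx c) r z); last first.
  by rewrite (memNset h2) (memNset h) mulr0.
by exfalso; apply: h; apply/ball_row_mx.
Qed.

Local Open Scope ereal_scope.

(* Unlike [ge0_le_integral], no measurability is needed: both sides are
   suprema of integrals of simple functions. *)
Lemma ge0_le_integralT d (T : measurableType d) (mu : {measure set T -> \bar R})
    (f g : T -> \bar R) :
  (forall x, 0 <= f x) -> (forall x, f x <= g x) ->
  \int[mu]_x f x <= \int[mu]_x g x.
Proof.
move=> f0 fg.
rewrite !ge0_integralTE //; last by move=> x; exact: le_trans (f0 x) (fg x).
apply: ereal_sup_le => _ [h hf <-]; exists h => //= x.
exact: le_trans (hf x) (fg x).
Qed.

Lemma leb_int_ge0 n (f : 'rV[R]_n -> \bar R) :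
  (forall y, 0 <= f y) -> 0 <= leb_int f.
Proof.
elim: n f => [|n IH] f f0 /=; first exact: f0.
by apply: integral_ge0 => y _; apply: IH => z; exact: f0.
Qed.

Lemma le_leb_int n (f g : 'rV[R]_n -> \bar R) :
  (forall y, 0 <= f y) -> (forall y, f y <= g y) -> leb_int f <= leb_int g.
Proof.
elim: n f g => [|n IH] f g f0 fg /=; first exact: fg.
apply: ge0_le_integralT => y; first by apply: leb_int_ge0 => z; exact: f0.
by apply: IH => z; [exact: f0 | exact: fg].
Qed.

Lemma integral_scale_indic_ball (c r k : R) : (0 < r)%R -> (0 <= k)%R ->
  \int[@lebesgue_measure R]_y (k * \1_(ball c r) y)%:E = (k * (2 * r))%:E.
Proof.
move=> r0 k0.
have mb : measurable (ball c r : set R) by rewrite ball_itv; exact: measurable_itv.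
rewrite (@integralZl_indic _ _ _ (@lebesgue_measure R) setT measurableT
  (fun _ => ball c r) k) //=; last by rewrite ltNge k0.
rewrite integral_indic // setIT ball_itv.
have := @lebesgue_measure_itv R `](c - r)%R, (c + r)%R[; move=> /= ->.
rewrite lte_fin ltrD2l gtrN // -EFinD -EFinM.
by congr (_ * _)%:E; ring.
Qed.

(* Balls of ['rV_n] are cubes of side [2 r] (sup norm). *)
Lemma leb_int_scale_indic_ball n (c : 'rV[R]_n) (r k : R) :
  (0 < r)%R -> (0 <= k)%R ->
  leb_int (fun y => (k * \1_(ball c r) y)%:E) = (k * (2 * r) ^+ n)%:E.
Proof.
move=> r0; elim: n c k => [|n IH] c k k0 /=.
  by rewrite indicE mem_set ?mulr1 ?expr0 ?mulr1 //; split => // i [] [].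
transitivity (\int[@lebesgue_measure R]_y
   ((k * (2 * r) ^+ n) * \1_(ball (c ord0 (@lshift 1 n ord0)) r) y)%:E).
  apply: eq_integral => y0 _.
  transitivity (leb_int (fun z : 'rV[R]_n =>
     ((k * \1_(ball (c ord0 (@lshift 1 n ord0)) r) y0) *
      \1_(ball (rsubmx (c : 'rV[R]_(1 + n))) r) z)%:E)).
    by congr leb_int; apply: funext => z; rewrite indic_ball_row_mx mulrA.
  by rewrite IH 1?mulrAC // mulr_ge0 // indicE ler0n.
rewrite integral_scale_indic_ball //; first by rewrite exprSr [in RHS]mulrA.
by rewrite mulr_ge0 // exprn_ge0 // mulr_ge0 // ltW.
Qed.

Lemma fine_leb_int_ball_bounds n (c : 'rV[R]_n) (r : R) (f : 'rV[R]_n -> R)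
    (lo hi : R) :
  (0 < r)%R -> (0 <= lo)%R -> (forall y, ball c r y -> (lo <= f y <= hi)%R) ->
  (lo * (2 * r) ^+ n <= fine (leb_int (fun y => (\1_(ball c r) y * f y)%:E))
   <= hi * (2 * r) ^+ n)%R.
Proof.
move=> r0 lo0 hf.
have hi0 : (0 <= hi)%R.
  by have /andP[h1 h2] := hf c (ballxx c r0); rewrite (le_trans lo0) // (le_trans h1).
have indic_f_bounds y : (lo * \1_(ball c r) y <= \1_(ball c r) y * f y
                         <= hi * \1_(ball c r) y)%R.
  rewrite indicE; have [h|h] := pselect (ball c r y).
    by rewrite mem_set // mul1r !mulr1; exact: hf.
  by rewrite memNset // mul0r !mulr0 lexx.
have lo_le : (lo * (2 * r) ^+ n)%:E <=
             leb_int (fun y => (\1_(ball c r) y * f y)%:E).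
  rewrite -(@leb_int_scale_indic_ball n c r lo) //; apply: le_leb_int => y.
    by rewrite lee_fin mulr_ge0 // indicE ler0n.
  by rewrite lee_fin; case/andP: (indic_f_bounds y).
have le_hi : leb_int (fun y => (\1_(ball c r) y * f y)%:E) <=
             (hi * (2 * r) ^+ n)%:E.
  rewrite -(@leb_int_scale_indic_ball n c r hi) //; apply: le_leb_int => y.
    case/andP: (indic_f_bounds y) => h _; rewrite lee_fin (le_trans _ h) //.
    by rewrite mulr_ge0 // indicE ler0n.
  by rewrite lee_fin; case/andP: (indic_f_bounds y).
move: lo_le le_hi; case: (leb_int _) => [L||] //= h1 h2.
by rewrite -!lee_fin h1 h2.
Qed.

Lemma ball_average_cvg n (c : 'rV[R]_n) (r0 : R) (f : 'rV[R]_n -> R) :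
  (0 < r0)%R -> (forall y, ball c r0 y -> (0 <= f y)%R) -> {for c, continuous f} ->
  (fun k : nat => (((2 * (r0 / k.+1%:R)) ^+ n)^-1 *
     fine (leb_int (fun y => (\1_(ball c (r0 / k.+1%:R)) y * f y)%:E)))%R)
  @ \oo --> f c.
Proof.
move=> r00 f0 cf; apply/cvgrPdist_le => e e0.
move/cvgrPdist_lt/(_ e e0)/nbhs_ballP: cf => [del /= del0 hdel].
exists (Num.truncn (r0 / del)) => // k /= hk.
set rk := (r0 / k.+1%:R)%R.
have rk0 : (0 < rk)%R by rewrite divr_gt0.
have rkr0 : (rk <= r0)%R by rewrite ler_pdivrMr // ler_peMr ?(ltW r00) // ler1n.
have rkdel : (rk < del)%R.
  rewrite ltr_pdivrMr // mulrC -ltr_pdivrMr //.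
  by apply: lt_le_trans (truncnS_gt _) _; rewrite ler_nat.
set lo := Num.max 0%R (f c - e)%R.
have lo0 : (0 <= lo)%R by rewrite le_max lexx.
have near_fc y : ball c rk y -> (lo <= f y <= f c + e)%R.
  move=> cy; have := hdel y (le_ball (ltW rkdel) cy) => /=.
  rewrite ltr_distlC => /andP[h1 h2]; rewrite ge_max f0 ?(ltW h1) ?(ltW h2) //.
  by apply: (le_ball rkr0).
have /andP[h1 h2] := fine_leb_int_ball_bounds rk0 lo0 near_fc.
have v0 : (0 < (2 * rk) ^+ n)%R by rewrite exprn_gt0 // mulr_gt0.
rewrite ler_distlC; apply/andP; split; last by rewrite mulrC ler_pdivrMr.
rewrite ler_pdivlMl //; apply: le_trans h1.
by rewrite mulrC ler_wpM2r ?(ltW v0) // le_max lexx orbT.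
Qed.

End IteratedIntegral.


Section Borel.
Variable R : realType.

Lemma borel_open (T : topologicalType) (A : set T) : open A -> borel_set A.
Proof. exact: sub_sigma_algebra. Qed.

Lemma borel_preimage_continuous (T U : topologicalType) (f : T -> U) :
  continuous f -> forall A, borel_set A -> borel_set (f @^-1` A).
Proof.
move=> cf A hA.
apply: (@smallest_sub _ (sigma_algebra [set: U]) _
  [set A | borel_set (f @^-1` A)] _ _ A hA); last first.
  by move=> B oB; apply: borel_open; apply: open_comp => // x _; exact: cf.
split => [|B /= hB|G hG /=].
- by rewrite /= preimage_set0; exact: sigma_algebra0.
- exact: sigma_algebraCD.
- by rewrite preimage_bigcup; exact: sigma_algebra_bigcup.
Qed.

(* The measurable sets of [R] are generated by the intervals [`]a, b]]. *)
Lemma measurable_borel (A : set R) : measurable A -> borel_set A.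
Proof.
move=> mA; apply: (@smallest_sub _ (sigma_algebra [set: R]) _ (@borel_set R)
  _ _ A mA); first exact: smallest_sigma_algebra.
move=> _ [[a b] _ <-] /=.
have -> : `]a, b]%classic =
    [set: R] `\` (([set: R] `\` `]a, +oo[%classic) `|` `]b, +oo[%classic).
  apply/seteqP; split => x /=; rewrite !in_itv /= ?andbT.
    move=> /andP[h1 h2]; split => // -[[_ /negP]|]; first by rewrite h1.
    by apply/negP; rewrite -leNgt.
  move=> [_ /not_orP[/not_andP[//|/contrapT h1] /negP h2]].
  by rewrite h1 leNgt h2.
apply: sigma_algebraCD.
rewrite -bigcup2E; apply: sigma_algebra_bigcup => -[|[|n]] /=.
- by apply: sigma_algebraCD; apply: borel_open; exact: itv_open_ends_open.
- by apply: borel_open; exact: itv_open_ends_open.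
- exact: sigma_algebra0.
Qed.

Lemma borel_on_indic (T : topologicalType) (A : set T) :
  borel_set A -> borel_on [set: T] (\1_A : T -> R).
Proof.
move=> hA B _; rewrite setTI.
have [h1|h1] := pselect (B 1); have [h0|h0] := pselect (B 0).
- have -> : (\1_A : T -> R) @^-1` B = [set: T].
    by apply/seteqP; split => x //= _; rewrite indicE; case: (x \in A).
  by rewrite -(setD0 [set: T]); apply: sigma_algebraCD; exact: sigma_algebra0.
- have -> : (\1_A : T -> R) @^-1` B = A.
    apply/seteqP; split => x /=; rewrite indicE.
      by have [/set_mem //|_] := boolP (x \in A).
    by move=> xA; rewrite mem_set.
  exact: hA.
- have -> : (\1_A : T -> R) @^-1` B = [set: T] `\` A.
    apply/seteqP; split => x /=; rewrite indicE.
      by have [//|/negP xA] := boolP (x \in A); split => // /mem_set.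
    by move=> [_ xA]; rewrite memNset.
  exact: sigma_algebraCD.
- have -> : (\1_A : T -> R) @^-1` B = set0.
    by apply/seteqP; split => x //=; rewrite indicE; case: (x \in A).
  exact: sigma_algebra0.
Qed.

Lemma measurable_fun_borel_comp d (Om : measurableType d) n
    (Y : Om -> 'rV[R]_n) (phi : 'rV[R]_n -> R) :
  (forall A, borel_set A -> measurable (Y @^-1` A)) ->
  borel_on [set: 'rV[R]_n] phi -> measurable_fun [set: Om] (phi \o Y).
Proof.
move=> mY bphi _ A mA; rewrite setTI.
by have := mY _ (bphi A (measurable_borel mA)); rewrite setTI.
Qed.

End Borel.

Lemma open_compact_ball_nbhs (R : realType) n (D : set 'rV[R]_n) (xi : 'rV[R]_n) :
  open D -> D xi ->
  exists2 r : R, 0 < r & exists K, [/\ compact K, K `<=` D & ball xi r `<=` K].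
Proof.
move=> oD Dxi.
have /nbhs_ballP[r0 /= r00 r0D] : nbhs xi D by apply: open_nbhs_nbhs.
exists (r0 / 2); first by rewrite divr_gt0.
pose I i := `[xi ord0 i - r0 / 2, xi ord0 i + r0 / 2]%classic.
exists [set v : 'rV[R]_n | forall i, I i (v ord0 i)]; split.
- by apply: (@rV_compact _ _ I) => i; exact: segment_compact.
- move=> v Kv; apply: r0D; split => // i j; rewrite (ord1 i) /ball /=.
  have := Kv j; rewrite /I /= in_itv /= -ler_distlC => h; apply: le_lt_trans h _.
  by rewrite ltr_pdivrMr // ltr_pMr // ltr1n.
- move=> v [_ hv] i; have := hv ord0 i; rewrite /ball /= => h.
  by rewrite /I /= in_itv /= -ler_distlC ltW.
Qed.

Section TransitionDensity.
Variables (R : realType) (d : nat) (T0 : R).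
Variables (dO : measure_display) (Omega : measurableType dO).
Variables (F : R -> R -> set (set Omega)) (X : R -> Omega -> 'rV[R]_d).
Variable P : R -> 'rV[R]_d -> probability Omega R.
Hypothesis X_Markov : cont_strong_Markov T0 F X P.

Lemma measurable_preimage_X t s A :
  0 <= t <= s -> s < T0 -> borel_set A -> measurable (X s @^-1` A).
Proof.
case: X_Markov => filt [_ [_ [adapted _]]] ts sT0 hA.
by have [_ sub] := filt t s ts sT0; apply: sub; exact: adapted.
Qed.

Lemma integral_indic_X t x T A : 0 <= t <= T -> T < T0 -> borel_set A ->
  (\int[P t x]_w (\1_A (X T w))%:E = P t x (X T @^-1` A))%E.
Proof.
move=> tT TT0 hA; rewrite -[E in P t x E]setIT -integral_indic //.
exact: measurable_preimage_X tT TT0 hA.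
Qed.

Lemma filtration_setT_set0 t s :
  0 <= t <= s -> s < T0 -> F t s setT /\ F t s set0.
Proof.
case: X_Markov => filt _ ts sT0; have [[F0 FC _] _] := filt t s ts sT0.
by split => //; rewrite -(setD0 [set: Omega]); apply: FC.
Qed.

Lemma stopping_time_cst t T s :
  0 <= t -> t <= s <= T -> T < T0 -> stopping_time F t T (fun _ => s).
Proof.
move=> t0 /andP[ts sT] TT0; split => [_|s' /andP[ts' s'T]]; first by rewrite ts.
have [FT F0] := filtration_setT_set0 (s := s') (t := t)
  (introT andP (conj t0 ts')) (le_lt_trans s'T TT0).
case: (leP s s') => _.
  by have -> : [set w : Omega | true] = setT by apply/seteqP; split.
by have -> : [set w : Omega | false] = set0 by apply/seteqP; split.
Qed.

Lemma F_tau_setT t T (tau : Omega -> R) :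
  0 <= t <= T -> T < T0 -> stopping_time F t T tau -> F_tau F t T tau setT.
Proof.
move=> tT TT0 [_ tauF]; split; first by case: (filtration_setT_set0 tT TT0).
by move=> s' hs'; rewrite setTI; exact: tauF.
Qed.

(* The strong Markov property at the deterministic time [s], applied to the
   indicator of [A]. *)
Lemma trans_chapman_kolmogorov t s T x A :
  0 <= t -> t <= s <= T -> T < T0 -> borel_set A ->
  ((trans X P t x T A)%:E = \int[P t x]_w (trans X P s (X s w) T A)%:E)%E.
Proof.
move=> t0 /andP[ts sT] TT0 hA.
have tT : 0 <= t <= T by rewrite t0 (le_trans ts sT).
have sT' : 0 <= s <= T by rewrite (le_trans t0 ts) sT.
have stop := stopping_time_cst t0 (introT andP (conj ts sT)) TT0.
have bdd : bdd_fun (\1_A : 'rV[R]_d -> R).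
  by exists 1 => z; rewrite indicE; case: (_ \in _); rewrite ?normr1 ?normr0.
case: X_Markov => _ [_ [_ [_ [_ [_ [_ smp]]]]]].
have := smp t T x (fun _ => s) _ tT TT0 stop (borel_on_indic hA) bdd setT
  (F_tau_setT tT TT0 stop).
rewrite /trans fineK ?integral_indic_X // => [->|].
  by apply: eq_integral => w _; rewrite /Eval integral_indic_X.
exact/fin_num_measure/(measurable_preimage_X tT TT0 hA).
Qed.

Lemma measurable_trans_X t s T A :
  0 <= t <= s -> s <= T -> T < T0 -> borel_set A ->
  measurable_fun setT (fun w => trans X P s (X s w) T A).
Proof.
move=> ts sT TT0 hA.
have s0 : 0 <= s by case/andP: ts => t0 /(le_trans t0).
apply: (@measurable_fun_borel_comp _ _ _ _ (X s) (fun y => trans X P s y T A)).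
  by move=> B; apply: measurable_preimage_X ts (le_lt_trans sT TT0).
case: X_Markov => _ [_ [_ [_ [_ [_ [transm _]]]]]].
by apply: transm => //; rewrite s0.
Qed.

Variables (D : set 'rV[R]_d) (Gamma : R -> 'rV[R]_d -> R -> 'rV[R]_d -> R).
Hypothesis D_open : open D.
Hypothesis Gamma_ge0 :
  forall t T x y, 0 < t -> t < T -> T < T0 -> D y -> 0 <= Gamma t x T y.
Hypothesis Gamma_borel :
  borel_on [set u : (R * 'rV[R]_d) * (R * 'rV[R]_d) |
              0 < u.1.1 /\ u.1.1 < u.2.1 /\ u.2.1 < T0 /\ D u.2.2]
           (fun u => Gamma u.1.1 u.1.2 u.2.1 u.2.2).
Hypothesis Gamma_density :
  forall t T x (A : set 'rV[R]_d), 0 < t -> t < T -> T < T0 ->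
    borel_set A -> A `<=` D ->
    P t x (X T @^-1` A) = leb_int (fun y => (\1_A y * Gamma t x T y)%:E).
Hypothesis Gamma_cont :
  forall t T x y, 0 < t -> t < T -> T < T0 -> D y ->
    {for y, continuous (Gamma t x T)}.
Hypothesis Gamma_bounded :
  forall t T (K : set 'rV[R]_d), 0 < t -> t < T -> T < T0 ->
    compact K -> K `<=` D -> exists C : R, forall x y, K y -> Gamma t x T y <= C.

Lemma Gamma_section_borel u T xi : 0 < u -> u < T -> T < T0 -> D xi ->
  borel_on [set: 'rV[R]_d] (fun x => Gamma u x T xi).
Proof.
move=> u0 uT TT0 Dxi A hA; rewrite setTI.
have cont_sec : continuous (fun x : 'rV[R]_d => ((u, x), (T, xi))).
  move=> y; have cst (V : topologicalType) (v : V) : (fun=> v) @ y --> v.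
    by apply: cvg_cst; exact: nbhs_filter.
  exact: cvg_pair (cvg_pair (cst _ u) cvg_id) (cst _ (T, xi)).
have := borel_preimage_continuous cont_sec (Gamma_borel hA).
by congr borel_set; apply/seteqP; split => y /=; [case | do ?split].
Qed.

Lemma trans_ball_Gamma u y T c r :
  0 < u -> u < T -> T < T0 -> 0 < r -> ball c r `<=` D ->
  trans X P u y T (ball c r) =
  fine (leb_int (fun z => (\1_(ball c r) z * Gamma u y T z)%:E)).
Proof.
move=> u0 uT TT0 r0 cD; rewrite /trans Gamma_density //.
by apply: borel_open; exact: ball_open.
Qed.

Definition ball_average u y T c r := ((2 * r) ^+ d)^-1 * trans X P u y T (ball c r).

Lemma ball_average_bounds u y T c r C :
  0 < u -> u < T -> T < T0 -> 0 < r -> ball c r `<=` D ->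
  (forall z, ball c r z -> Gamma u y T z <= C) -> 0 <= ball_average u y T c r <= C.
Proof.
move=> u0 uT TT0 r0 cD GC.
have GC' z : ball c r z -> 0 <= Gamma u y T z <= C.
  by move=> cz; rewrite Gamma_ge0 ?GC //; exact: cD.
have /andP[] := fine_leb_int_ball_bounds r0 (lexx 0) GC'; rewrite mul0r.
have v0 : 0 < (2 * r) ^+ d by rewrite exprn_gt0 // mulr_gt0.
rewrite /ball_average trans_ball_Gamma // => ge0 le_C; apply/andP; split.
  by rewrite mulr_ge0 // invr_ge0 ltW.
by rewrite mulrC ler_pdivrMr.
Qed.

Lemma ball_average_Gamma_cvg u y T xi r :
  0 < u -> u < T -> T < T0 -> D xi -> 0 < r -> ball xi r `<=` D ->
  (fun k : nat => ball_average u y T xi (r / k.+1%:R)) @ \oo --> Gamma u y T xi.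
Proof.
move=> u0 uT TT0 Dxi r0 xiD.
have rk0 k : 0 < r / k.+1%:R by rewrite divr_gt0.
have rk_le k : r / k.+1%:R <= r by rewrite ler_pdivrMr // ler_peMr ?(ltW r0) // ler1n.
rewrite (_ : (fun k => _) = fun k => ((2 * (r / k.+1%:R)) ^+ d)^-1 *
   fine (leb_int (fun z => (\1_(ball xi (r / k.+1%:R)) z * Gamma u y T z)%:E))).
  apply: ball_average_cvg r0 _ (Gamma_cont u0 uT TT0 Dxi) => z xiz.
  exact/Gamma_ge0/xiD.
apply: funext => k; rewrite /ball_average trans_ball_Gamma //.
by move=> z /(le_ball (rk_le k)); exact: xiD.
Qed.

Lemma Gamma_chapman_kolmogorov t s T x xi :
  0 < t -> t < s -> s < T -> T < T0 -> D xi ->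
  ((Gamma t x T xi)%:E = \int[P t x]_w (Gamma s (X s w) T xi)%:E)%E.
Proof.
move=> t0 ts sT TT0 Dxi.
have s0 : 0 < s := lt_trans t0 ts.
have tT : t < T := lt_trans ts sT.
have [r r0 [K [Kc KD xiK]]] := open_compact_ball_nbhs D_open Dxi.
have [C GC] := Gamma_bounded s0 sT TT0 Kc KD.
pose rk k := r / k.+1%:R.
have rk0 k : 0 < rk k by rewrite divr_gt0.
have ball_rk k : ball xi (rk k) `<=` ball xi r.
  by apply: le_ball; rewrite ler_pdivrMr // ler_peMr ?(ltW r0) // ler1n.
have ts' : 0 <= t <= s by rewrite !ltW.
have ball_borel k : borel_set (ball xi (rk k)).
  by apply: borel_open; exact: ball_open.
have average_CK k : ((ball_average t x T xi (rk k))%:E =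
    \int[P t x]_w (ball_average s (X s w) T xi (rk k))%:E)%E.
  rewrite EFinM (trans_chapman_kolmogorov (s := s)) ?(ltW t0) ?(ltW ts) ?(ltW sT) //.
  under [RHS]eq_integral do rewrite EFinM.
  rewrite ge0_integralZl_EFin //.
  - by move=> w _; rewrite lee_fin fine_ge0 // measure_ge0.
  - by apply/measurable_EFinP; exact: measurable_trans_X ts' (ltW sT) TT0 (ball_borel k).
  - by rewrite invr_ge0 exprn_ge0 // mulr_ge0 ?ltW.
have avg_cvg u y : 0 < u -> u < T ->
    (fun k => (ball_average u y T xi (rk k))%:E) @ \oo --> (Gamma u y T xi)%:E.
  move=> u0 uT; apply: cvg_EFin; first exact: nearW.
  exact: ball_average_Gamma_cvg (fun z xiz => KD _ (xiK _ xiz)).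
have dominated : (fun k => \int[P t x]_w (ball_average s (X s w) T xi (rk k))%:E)%E
    @ \oo --> (\int[P t x]_w (Gamma s (X s w) T xi)%:E)%E.
  apply: (@dominated_cvg _ _ _ _ _ measurableT _ _ (fun=> C%:E)) => //.
  - move=> k; apply/measurable_EFinP; apply: measurable_funM => //.
    exact: measurable_trans_X ts' (ltW sT) TT0 (ball_borel k).
  - by move=> w _; exact: avg_cvg.
  - exact: finite_measure_integrable_cst.
  - move=> k w _; rewrite abse_EFin lee_fin.
    have /andP[ge0 le_C] := ball_average_bounds (y := X s w) s0 sT TT0 (rk0 k)
      (fun z xiz => KD _ (xiK _ (ball_rk k z xiz)))
      (fun z xiz => GC _ _ (xiK _ (ball_rk k z xiz))).
    by rewrite ger0_norm.
apply: (@cvg_unique _ (@ereal_hausdorff R) _ _ _ _ _ dominated).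
by rewrite -(funext average_CK); exact: avg_cvg.
Qed.

End TransitionDensity.

Theorem mainTheorem10
  (R : realType) (d p0 : nat) (T0 : R) (B : 'M[R]_d)
  (dO : measure_display) (Omega : measurableType dO)
  (F : R -> R -> set (set Omega)) (X : R -> Omega -> 'rV[R]_d)
  (P : R -> 'rV[R]_d -> probability Omega R)
  (D : set 'rV[R]_d)
  (a : 'I_d -> 'I_d -> R * 'rV[R]_d -> R) (b : 'I_d -> R * 'rV[R]_d -> R)
  (N : nat) (alpha M : R)
  (Gamma : R -> 'rV[R]_d -> R -> 'rV[R]_d -> R) :
  (* standing setting *)
  0 < T0 -> (1 <= p0)%N -> (p0 <= d)%N ->
  (* D is a domain *)
  open D -> connected D -> D !=set0 ->
  (* coefficients: symmetric, in L^oo_loc([0,T0[ x D) *)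
  (forall i j z, a i j z = a j i z) ->
  (forall K : set (R * 'rV[R]_d), compact K ->
     K `<=` [set z | 0 <= z.1 < T0 /\ D z.2] ->
     exists C : R, forall z, K z ->
       (forall i j : 'I_d, `|a i j z| <= C) /\ (forall i : 'I_d, `|b i z| <= C)) ->
  (forall i j : 'I_d,
     borel_on [set z : R * 'rV[R]_d | 0 <= z.1 < T0 /\ D z.2] (a i j)) ->
  (forall i : 'I_d,
     borel_on [set z : R * 'rV[R]_d | 0 <= z.1 < T0 /\ D z.2] (b i)) ->
  (* Assumption (H) *)
  hoermander p0 B ->
  (* Assumption (R) *)
  0 < alpha <= 1 -> 0 < M ->
  (forall i j : 'I_d, (i < p0)%N -> (j < p0)%N ->
     CnB_M p0 B [set z | 0 < z.1 < T0 /\ D z.2] alpha M N (a i j)) ->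
  (forall i : 'I_d, (i < p0)%N ->
     CnB_M p0 B [set z | 0 < z.1 < T0 /\ D z.2] alpha M N (b i)) ->
  (forall z : R * 'rV[R]_d, 0 < z.1 < T0 -> D z.2 ->
     forall xi : 'I_d -> R,
       M^-1 * (\sum_(i < d | (i < p0)%N) xi i ^+ 2)
         <= \sum_(i < d | (i < p0)%N) \sum_(j < d | (j < p0)%N) a i j z * xi i * xi j
       /\ \sum_(i < d | (i < p0)%N) \sum_(j < d | (j < p0)%N) a i j z * xi i * xi j
         <= M * (\sum_(i < d | (i < p0)%N) xi i ^+ 2)) ->
  (* Assumption (F) *)
  (forall (T : R) (phi : 'rV[R]_d -> R), 0 < T < T0 ->
     bdd_fun phi -> continuous phi ->
     {within [set z : R * 'rV[R]_d | 0 < z.1 < T /\ D z.2],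
        continuous (fun z => Eval X P z.1 z.2 T phi)}) ->
  (* X is a continuous strong Markov process, local diffusion generated by A_t on D *)
  cont_strong_Markov T0 F X P ->
  local_diffusion T0 X P p0 B D a b ->
  (* Gamma is its local transition density on D *)
  (forall t T x y, 0 < t -> t < T -> T < T0 -> D y -> 0 <= Gamma t x T y) ->
  borel_on [set u : (R * 'rV[R]_d) * (R * 'rV[R]_d) |
              0 < u.1.1 /\ u.1.1 < u.2.1 /\ u.2.1 < T0 /\ D u.2.2]
           (fun u => Gamma u.1.1 u.1.2 u.2.1 u.2.2) ->
  (forall t T x (A : set 'rV[R]_d), 0 < t -> t < T -> T < T0 ->
     borel_set A -> A `<=` D ->
     P t x (X T @^-1` A) = leb_int (fun y => (\1_A y * Gamma t x T y)%:E)) ->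
  (forall t T x y, 0 < t -> t < T -> T < T0 -> D y ->
     {for y, continuous (Gamma t x T)}) ->
  (forall t T (K : set 'rV[R]_d), 0 < t -> t < T -> T < T0 ->
     compact K -> K `<=` D ->
     exists C : R, forall x y, K y -> Gamma t x T y <= C) ->
  (* conclusion *)
  forall t T xi, 0 < t -> t < T -> T < T0 -> D xi ->
    (exists C : R, forall x, `|Gamma t x T xi| <= C) /\
    borel_on [set: 'rV[R]_d] (fun x => Gamma t x T xi) /\
    (forall s x, t < s -> s < T ->
       ((Gamma t x T xi)%:E = \int[P t x]_w (Gamma s (X s w) T xi)%:E)%E).
Proof.
move=> _ _ _ oD _ _ _ _ _ _ _ _ _ _ _ _ _ XM _ G0 Gm Gdens Gcont Gbd t T xi t0 tT TT0 Dxi.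
split; last split.
- have xiD : [set xi] `<=` D by move=> y ->.
  have [C GC] := Gbd t T [set xi] t0 tT TT0 (@compact_set1 _ xi) xiD.
  by exists C => x; rewrite ger0_norm ?G0 //; exact: GC.
- exact: (Gamma_section_borel Gm).
- by move=> s x ts sT; exact: (Gamma_chapman_kolmogorov XM oD).
Qed.
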